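(* Let $G$ be a finite simple graph, $\alpha=\alpha(G)$, $g_j$ the number of independent sets of $G$ of size $j$ ($1\le j\le \alpha$), and $g=\sum_{j=1}^{\alpha}(-1)^{j-1}g_j$. For $0\le s\le \alpha-1$ set $D_s=\sum_{j=s+1}^{\alpha}(-1)^{j-1-s}g_j\binom{j}{j-1-s}$. If $g=1$, then $\deg h_{R/I(G)}(t)=\alpha-d'-1$, where $d'=\min\{s: 0\le s\le\alpha-1,\ D_s\neq 0\}$.
   Context: An independent set of $G$ is a set of pairwise non-adjacent vertices; $\alpha(G)$ is the maximum size of one. For $G$ on vertices $x_1,\dots,x_n$, $R=k[x_1,\dots,x_n]$ over a field $k$, $I(G)=(x_ix_j:\{x_i,x_j\}\in E(G))$, and $h_{R/I(G)}(t)$ is the numerator of the Hilbert series of $R/I(G)$ written as a reduced fraction $h_{R/I(G)}(t)/(1-t)^{\dim R/I(G)}$. *)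

From HB Require Import structures.
From mathcomp Require Import all_boot all_order all_algebra.
Set Implicit Arguments. Unset Strict Implicit. Unset Printing Implicit Defensive.
Import Order.TTheory GRing.Theory Num.Theory.

Definition simple_graph (T : finType) (e : rel T) : Prop :=
  symmetric e /\ irreflexive e.

Definition independent (T : finType) (e : rel T) (A : {set T}) : bool :=
  [forall x in A, forall y in A, ~~ e x y].

Definition alpha (T : finType) (e : rel T) : nat :=
  \max_(A : {set T} | independent e A) #|A|.

Definition gcount (T : finType) (e : rel T) (j : nat) : nat :=
  #|[set A : {set T} | independent e A & #|A| == j]|.

Definition galt (T : finType) (e : rel T) : int :=
  (\sum_(1 <= j < (alpha e).+1) (-1) ^+ j.-1 * (gcount e j)%:Z)%R.

Definition Dcoef (T : finType) (e : rel T) (s : nat) : int :=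
  (\sum_(s.+1 <= j < (alpha e).+1)
      (-1) ^+ (j - 1 - s) * (gcount e j * 'C(j, j - 1 - s))%:Z)%R.

(* Hilbert function of R/I(G), R = k[x_v : v in T]: the degree-d part of
   R/I(G) has as k-basis the monomials of degree d not in the monomial ideal
   I(G), i.e. exponent vectors f with total degree d such that no edge {x,y}
   has both f x > 0 and f y > 0. (Independent of the field k.) *)
Definition hilbert_fun (T : finType) (e : rel T) (d : nat) : nat :=
  #|[set f : {ffun T -> 'I_d.+1} |
      (\sum_(x : T) (f x : nat) == d) &&
      [forall x, forall y, e x y ==> ((f x == 0 :> nat) || (f y == 0 :> nat))]]|.

(* (h, dim) is the reduced form of the Hilbert series:
   HS(t) = h(t)/(1-t)^dim as formal power series, i.e.
   (1-t)^dim * HS(t) = h(t) coefficientwise, and the fraction is reduced,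
   i.e. h(1) <> 0. *)
Definition hilbert_numerator (T : finType) (e : rel T) (h : {poly int})
    (dim : nat) : Prop :=
  (forall n : nat,
     (h`_n)%R = (\sum_(k < dim.+1 | (k <= n)%N)
               (-1) ^+ k * ('C(dim, k) * hilbert_fun e (n - k))%:Z)%R)
  /\ h.[1]%R != 0%R.

(* Grouping the standard monomials of R/I(G) by their support, which is an
   independent set S, the Hilbert series is sum_S (t/(1-t))^|S|; replacing
   t/(1-t) by t + ... + t^N computes it up to degree N. Hence
   h(t) = sum_j g_j t^j (1-t)^(alpha-j), a reduced numerator because
   h(1) = g_alpha > 0. The substitution t -> 1-t preserves the degree and turns
   h into sum_j g_j (1-t)^j t^(alpha-j), whose coefficient of t^alpha is
   1 - g = 0 and whose coefficient of t^(alpha-1-s) is D_s. *)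

From HB Require Import structures.
From mathcomp Require Import all_boot all_order all_algebra.
From mathcomp Require Import zify.
Set Implicit Arguments. Unset Strict Implicit. Unset Printing Implicit Defensive.
Import Order.TTheory GRing.Theory Num.Theory.
Local Open Scope ring_scope.

Section TakePoly.
Variable R : nzRingType.
Implicit Types p q : {poly R}.

Lemma take_polyMr N p q : take_poly N (p * q) = take_poly N (p * take_poly N q).
Proof.
by rewrite -{1}(poly_take_drop N q) mulrDr mulrA take_polyD take_polyMXn_0 addr0.
Qed.

Lemma take_polyMl N p q : take_poly N (p * q) = take_poly N (take_poly N p * q).
Proof.
rewrite -{1}(poly_take_drop N p) mulrDl -mulrA -commr_polyXn mulrA.
by rewrite take_polyD take_polyMXn_0 addr0.
Qed.

Lemma take_poly_exp N p k : take_poly N (p ^+ k) = take_poly N (take_poly N p ^+ k).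
Proof.
elim: k => [|k IHk] //.
by rewrite !exprS take_polyMl take_polyMr IHk -take_polyMr.
Qed.

Lemma take_poly_ext p q : (forall N, take_poly N.+1 p = take_poly N.+1 q) -> p = q.
Proof.
move=> eq_pq; apply/polyP => i.
by have := congr1 (coefp i) (eq_pq i); rewrite /= !coef_take_poly ltnSn.
Qed.

Lemma coef_1subX_exp d i : ((1 - 'X) ^+ d : {poly R})`_i = (-1) ^+ i * 'C(d, i)%:R.
Proof.
elim: d i => [|d IHd] [|i]; rewrite ?expr0 ?coef1 ?bin0 ?bin0n ?mulr1 ?mulr0 //.
  by rewrite exprSr mulrBr mulr1 coefB coefMX /= IHd expr0 bin0 mulr1 subr0.
rewrite exprSr mulrBr mulr1 coefB coefMX /= !IHd binS natrD mulrDr.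
by congr (_ + _); rewrite exprS mulN1r mulNr.
Qed.

Definition geomX m : {poly R} := \sum_(1 <= k < m.+1) 'X^k.

Lemma mul_1subX_geomX m : (1 - 'X) * geomX m = 'X - 'X^(m.+1).
Proof.
rewrite mulr_sumr (telescope_sumr_eq (fun k => - 'X^k)) //.
  by rewrite opprK addrC expr1.
by move=> k _; rewrite mulrBl mul1r -exprS opprK addrC.
Qed.

Lemma take_geomX m N : (m <= N)%N -> take_poly m.+1 (geomX N) = geomX m.
Proof.
move=> le_mN; rewrite /geomX take_poly_sum (@big_cat_nat _ _ _ m.+1) //=.
rewrite [X in _ + X]big_nat_cond [X in _ + X]big1 ?addr0 => [|k /andP[/andP[lt_mk _] _]].
  by apply: eq_big_nat => k /andP[_ le_km]; rewrite take_poly_id // size_polyXn.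
by rewrite -[_ ^+ k]mul1r take_polyMXn (eqP lt_mk) take_poly0l mul0r.
Qed.

Lemma take_1subX_geomX_exp m j :
  take_poly m.+1 (((1 - 'X) * geomX m) ^+ j) = take_poly m.+1 ('X^j).
Proof.
have take_Xm : take_poly m.+1 ('X^(m.+1) : {poly R}) = 0.
  by rewrite -[_ ^+ _]mul1r take_polyMXn_0.
by rewrite mul_1subX_geomX [LHS]take_poly_exp [RHS]take_poly_exp raddfB /= take_Xm subr0.
Qed.

End TakePoly.

Arguments geomX {R} m.

Lemma mul_1subX_exp_cancel (R : idomainType) (a b : nat) (p q : {poly R}) :
  (1 - 'X) ^+ a * p = (1 - 'X) ^+ b * q -> p.[1] != 0 -> q.[1] != 0 -> p = q.
Proof.
wlog le_ab : a b p q / (a <= b)%N.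
  move=> wlog_ab eq_pq p1 q1; case: (leqP a b) => [le_ab | /ltnW le_ba].
    exact: wlog_ab eq_pq p1 q1.
  by apply/esym/(wlog_ab b a) => //; apply/esym.
move=> eq_pq p1 _.
have nz_1subX : (1 - 'X : {poly R}) != 0.
  by rewrite -opprB oppr_eq0 -polyC1 polyXsubC_eq0.
move: eq_pq p1; rewrite -(subnKC le_ab) exprD -mulrA.
move=> /(mulfI (expf_neq0 a nz_1subX)) ->.
case: (b - a)%N => [|k]; first by rewrite mul1r.
by rewrite hornerM horner_exp !hornerE subrr expr0n mul0r eqxx.
Qed.

Section IndependentSets.
Variables (T : finType) (e : rel T).

Definition fsupp m (f : {ffun T -> 'I_m}) : {set T} := [set x | f x != 0 :> nat].

Lemma independent_fsuppE m (f : {ffun T -> 'I_m}) :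
  independent e (fsupp f) =
  [forall x, forall y, e x y ==> ((f x == 0 :> nat) || (f y == 0 :> nat))].
Proof.
apply: eq_forallb => x; rewrite inE; case: eqP => /= [_|_].
  by apply/esym/forallP => y; rewrite implybT.
by apply: eq_forallb => y; rewrite inE; case: eqP; case: (e x y).
Qed.

Lemma leq_card_alpha (S : {set T}) : independent e S -> (#|S| <= alpha e)%N.
Proof. exact: (@leq_bigmax_cond _ (independent e) (fun A : {set T} => #|A|)). Qed.

Lemma sum_independent_card (V : nmodType) (F : nat -> V) :
  \sum_(S : {set T} | independent e S) F #|S|
  = \sum_(j < (alpha e).+1) F j *+ gcount e j.
Proof.
rewrite (partition_big (fun S : {set T} => inord #|S| : 'I_(alpha e).+1) xpredT) //=.
apply: eq_bigr => j _; rewrite /gcount -sumr_const.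
apply: eq_big => [S | S /andP[indS /eqP <-]]; last by rewrite inordK // ltnS leq_card_alpha.
rewrite inE; case indS: (independent e S) => //=.
by rewrite -val_eqE /= inordK // ltnS leq_card_alpha.
Qed.

Lemma independent_set0 : independent e set0.
Proof. by apply/forall_inP => x; rewrite inE. Qed.

Lemma gcount0 : gcount e 0 = 1%N.
Proof.
rewrite /gcount (_ : [set _ | _] = [set set0]) ?cards1 //.
apply/setP => S; rewrite !inE cards_eq0.
by case: eqP => [->|]; rewrite ?andbF ?independent_set0.
Qed.

Lemma gcount_alpha_gt0 : (0 < gcount e (alpha e))%N.
Proof.
have indep0 : (0 < #|[pred A : {set T} | independent e A]|)%N.
  by apply/card_gt0P; exists set0; rewrite inE independent_set0.
have [S indS alphaE] := eq_bigmax_cond (fun A : {set T} => #|A|) indep0.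
rewrite inE in indS; have -> : alpha e = #|S| by exact: alphaE.
by apply/card_gt0P; exists S; rewrite inE indS eqxx.
Qed.

End IndependentSets.

Section HilbertSeries.
Variables (T : finType) (e : rel T).

Lemma hilbert_funE m : (hilbert_fun e m)%:Z =
  (\sum_(f : {ffun T -> 'I_m.+1} | independent e (fsupp f)) 'X^(\sum_x (f x : nat))%N)`_m.
Proof.
rewrite coef_sum /hilbert_fun -sum1_card -natz natr_sum big_mkcond [RHS]big_mkcond /=.
apply: eq_bigr => f _; rewrite inE -independent_fsuppE coefXn eq_sym.
by case: (independent _ _); rewrite ?andbT ?andbF //; case: (_ == _).
Qed.

Lemma sum_fsupp_eq m (S : {set T}) :
  \sum_(f : {ffun T -> 'I_m.+1} | fsupp f == S) 'X^(\sum_x (f x : nat))%N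
  = geomX m ^+ #|S| :> {poly int}.
Proof.
pose F x (k : 'I_m.+1) : {poly int} := if (k != 0 :> nat) == (x \in S) then 'X^k else 0.
transitivity (\sum_(f : {ffun T -> 'I_m.+1}) \prod_x F x (f x)).
  rewrite big_mkcond; apply: eq_bigr => f _; case: eqP => [suppE | suppN].
    by rewrite -prodrXr; apply: eq_bigr => x _; rewrite /F -suppE inE eqxx.
  have [x fxN | fE] := pickP (fun x => (f x != 0 :> nat) != (x \in S)).
    by rewrite (bigD1 x) //= /F (negbTE fxN) mul0r.
  by case: suppN; apply/setP => x; have /negbFE/eqP := fE x; rewrite inE.
rewrite -bigA_distr_bigA -prodr_const [RHS]big_mkcond; apply: eq_bigr => x _.
rewrite /F big_ord_recl /=; case: (x \in S) => /=.
  by rewrite add0r /geomX big_add1 big_mkord.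
by rewrite big1 ?addr0.
Qed.

Definition hseries N : {poly int} :=
  \sum_(S : {set T} | independent e S) geomX N ^+ #|S|.

Lemma hilbert_fun_hseries m N : (m <= N)%N -> (hilbert_fun e m)%:Z = (hseries N)`_m.
Proof.
move=> le_mN.
have take_hseries : take_poly m.+1 (hseries N) = take_poly m.+1 (hseries m).
  rewrite !take_poly_sum; apply: eq_bigr => S _.
  by rewrite [LHS]take_poly_exp take_geomX // -take_poly_exp.
have := congr1 (coefp m) take_hseries; rewrite /= !coef_take_poly ltnSn => -> /=.
rewrite hilbert_funE (partition_big (@fsupp _ m.+1) (independent e)) //=.
rewrite (eq_bigr (fun S : {set T} => geomX m ^+ #|S| : {poly int})) // => S indS.
rewrite -sum_fsupp_eq; apply: eq_bigl => f.
by case: eqP => [->|]; rewrite ?indS ?andbF.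
Qed.

Definition hnum : {poly int} :=
  \sum_(j < (alpha e).+1) ('X^j * (1 - 'X) ^+ (alpha e - j)) *+ gcount e j.

Lemma take_1subX_hseries N :
  take_poly N.+1 ((1 - 'X) ^+ alpha e * hseries N) = take_poly N.+1 hnum.
Proof.
rewrite /hseries sum_independent_card mulr_sumr !take_poly_sum.
apply: eq_bigr => j _; rewrite mulrnAr !raddfMn /=; congr (_ *+ _).
have -> : (1 - 'X) ^+ alpha e = (1 - 'X) ^+ (alpha e - j) * (1 - 'X) ^+ j :> {poly int}.
  by rewrite -exprD subnK // -ltnS.
rewrite -mulrA -exprMn take_polyMr take_1subX_geomX_exp.
by rewrite -take_polyMr mulrC.
Qed.

Lemma take_hilbert_numerator h dim N : hilbert_numerator e h dim ->
  take_poly N.+1 h = take_poly N.+1 ((1 - 'X) ^+ dim * hseries N).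
Proof.
case=> h_coef _; apply/polyP => n; rewrite !coef_take_poly ltnS.
case: leqP => // le_nN; rewrite h_coef coefM.
pose G k := (-1) ^+ k * ('C(dim, k) * hilbert_fun e (n - k))%:Z.
rewrite [RHS](eq_bigr (fun k : 'I_n.+1 => G k)) => [|k _]; last first.
  rewrite coef_1subX_exp -hilbert_fun_hseries ?(leq_trans (leq_subr k n)) //.
  by rewrite /G -mulrA PoszM natz.
(* Both sides sum over k <= minn n dim, since 'C(dim, k) = 0 for k > dim. *)
rewrite (big_ord_widen_cond (n + dim).+1 (fun k => k <= n)%N G) ?ltnS ?leq_addl //.
rewrite (big_ord_widen (n + dim).+1 G) ?ltnS ?leq_addr //.
rewrite big_mkcond [RHS]big_mkcond; apply: eq_bigr => k _; rewrite !ltnS.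
case: (leqP k n) => //= _; case: (leqP k dim) => // lt_dk.
by rewrite /G bin_small // mul0n mulr0.
Qed.

Lemma horner_hnum1 : hnum.[1] = (gcount e (alpha e))%:R.
Proof.
rewrite horner_sum big_ord_recr /= big1 ?add0r => [|j _].
  by rewrite hornerMn hornerM horner_exp !hornerE subnn expr0 mulr1 expr1n.
rewrite hornerMn hornerM horner_exp !hornerE subrr expr0n.
by rewrite subn_eq0 leqNgt ltn_ord /= mulr0 mul0rn.
Qed.

Lemma hilbert_numerator_hnum h dim : hilbert_numerator e h dim -> h = hnum.
Proof.
move=> hnumer; have [_ h1] := hnumer.
apply: (@mul_1subX_exp_cancel _ (alpha e) dim) h1 _; last first.
  by rewrite horner_hnum1 pnatr_eq0 -lt0n gcount_alpha_gt0.
apply: take_poly_ext => N.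
rewrite take_polyMr (take_hilbert_numerator N hnumer) -take_polyMr.
rewrite mulrA -exprD addnC exprD -mulrA take_polyMr take_1subX_hseries.
by rewrite -take_polyMr.
Qed.

End HilbertSeries.

Section Degree.
Variables (T : finType) (e : rel T).

Lemma coef_hnum_comp_1subX m : (hnum e \Po (1 - 'X))`_m =
  \sum_(j < (alpha e).+1)
    (if (m < alpha e - j)%N then 0
     else (-1) ^+ (m - (alpha e - j)) * 'C(j, m - (alpha e - j))%:R) *+ gcount e j.
Proof.
rewrite rmorph_sum coef_sum; apply: eq_bigr => j _ /=.
rewrite rmorphMn rmorphM !rmorphXn rmorphB rmorph1 /= comp_polyX subKr.
by rewrite coefMn coefMXn coef_1subX_exp.
Qed.

Lemma coef_hnum_comp_1subX_gt m : (alpha e < m)%N -> (hnum e \Po (1 - 'X))`_m = 0.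
Proof.
move=> lt_am; rewrite coef_hnum_comp_1subX big1 // => j _.
have le_ja : (j <= alpha e)%N := ltn_ord j.
rewrite ifF; last by apply/negbTE; rewrite -leqNgt; lia.
by rewrite bin_small ?mulr0 ?mul0rn //; lia.
Qed.

Lemma coef_hnum_comp_1subX_alpha : galt e = 1 -> (hnum e \Po (1 - 'X))`_(alpha e) = 0.
Proof.
rewrite /galt big_add1 big_mkord /= => galt1; rewrite coef_hnum_comp_1subX.
rewrite (eq_bigr (fun j : 'I_(alpha e).+1 => (-1) ^+ j *+ gcount e j)) => [|j _]; last first.
  have le_ja : (j <= alpha e)%N := ltn_ord j.
  by rewrite ltnNge leq_subr /= subKn // binn mulr1.
rewrite big_ord_recl expr0 gcount0 [X in _ + X](_ : _ = -1) ?subrr //.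
rewrite -[in RHS]galt1 -sumrN; apply: eq_bigr => i _.
by rewrite exprS mulN1r mulNrn -mulr_natr natz.
Qed.

Lemma coef_hnum_comp_1subX_Dcoef s : (s < alpha e)%N ->
  (hnum e \Po (1 - 'X))`_(alpha e - s.+1) = Dcoef e s.
Proof.
move=> lt_sa; rewrite coef_hnum_comp_1subX /Dcoef (big_nat_widenl _ 0) // big_mkord.
rewrite [RHS]big_mkcond; apply: eq_bigr => j _.
have le_ja : (j <= alpha e)%N := ltn_ord j.
case: (ltnP s j) => le_sj /=.
  rewrite ifF; last by apply/negbTE; rewrite -leqNgt; lia.
  have -> : (alpha e - s.+1 - (alpha e - j) = j - 1 - s)%N by lia.
  by rewrite -mulr_natr -mulrA -natrM mulnC natz.
have -> : (alpha e - s.+1 < alpha e - j)%N by lia.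
by rewrite mul0rn.
Qed.

Lemma size_hnum d : galt e = 1 -> (d < alpha e)%N -> Dcoef e d != 0 ->
  (forall s, (s < d)%N -> Dcoef e s = 0) -> size (hnum e) = (alpha e - d)%N.
Proof.
move=> galt1 lt_da Dd D_lt.
have size_1subX : size (1 - 'X : {poly int}) = 2.
  by rewrite -opprB size_polyN -polyC1 size_XsubC.
rewrite -(size_comp_poly2 (hnum e) size_1subX); apply/eqP; rewrite eqn_leq.
apply/andP; split.
  apply/leq_sizeP => m le_m; case: (ltngtP (alpha e) m) => [lt_am | lt_ma | <-].
  - exact: coef_hnum_comp_1subX_gt.
  - have -> : m = (alpha e - (alpha e - m.+1).+1)%N by lia.
    rewrite coef_hnum_comp_1subX_Dcoef; last by lia.
    by apply: D_lt; lia.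
  - exact: coef_hnum_comp_1subX_alpha.
have -> : (alpha e - d = (alpha e - d.+1).+1)%N by lia.
rewrite ltnNge; apply/negP => /leq_sizeP/(_ _ (leqnn _)).
by rewrite coef_hnum_comp_1subX_Dcoef // => /eqP; rewrite (negbTE Dd).
Qed.

End Degree.

Theorem corollary3p4 (T : finType) (e : rel T) (h : {poly int}) (dim d' : nat) :
  simple_graph e ->
  galt e = 1%R ->
  (d' < alpha e)%N ->
  Dcoef e d' != 0%R ->
  (forall s : nat, (s < d')%N -> Dcoef e s = 0%R) ->
  hilbert_numerator e h dim ->
  (size h).-1 = (alpha e - d' - 1)%N.
Proof.
move=> _ galt1 lt_d'a Dd' D_lt hnumer.
by rewrite (hilbert_numerator_hnum hnumer) (size_hnum galt1 lt_d'a Dd' D_lt) subn1.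
Qed.
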